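(* Let $A,B,C$ be finite-dimensional quantum systems, $C'$ a copy of $C$, and let $\Lambda^{C\to AB}$ be a channel extension of a channel $\Lambda^{C\to B}$. Then $\Lambda^{C\to AB}$ is steerable if and only if the Choi–Jamiołkowski state $J_{C'AB}(\Lambda^{C\to AB})$ is steerable by Alice acting on $A$ (i.e. steerable from $A$ to $BC'$).
   Context: A channel extension of $\Lambda^{C\to B}$ is a channel (completely positive trace-preserving map) $\Lambda^{C\to AB}$ with $\mathrm{Tr}_A\circ\Lambda^{C\to AB}=\Lambda^{C\to B}$. An instrument is a collection $\{\Lambda_\lambda\}_\lambda$ of completely positive maps whose sum is a channel. A channel assemblage $\{\Lambda_{a|x}\}_{a,x}$ for $\Lambda^{C\to B}$ is a collection of completely positive maps with $\sum_a\Lambda_{a|x}=\Lambda^{C\to B}$ for all $x$; it is unsteerable if there exist an instrument $\{\Lambda_\lambda\}_\lambda$ and conditional probability distributions $p(a|x,\lambda)$ with $\Lambda_{a|x}=\sum_\lambda p(a|x,\lambda)\Lambda_\lambda$. A measurement assemblage on $A$ is a family $\{M^A_{a|x}\}_{a,x}$ with $\{M^A_{a|x}\}_a$ a POVM for each $x$; it induces the channel assemblage $\Lambda_{a|x}[X]=\mathrm{Tr}_A(M^A_{a|x}\Lambda^{C\to AB}[X])$. The extension $\Lambda^{C\to AB}$ is unsteerable if every measurement assemblage on $A$ induces an unsteerable channel assemblage, and steerable otherwise. The Choi–Jamiołkowski operator of a map $\Gamma^{C\to Y}$ is $J_{C'Y}(\Gamma)=(\mathrm{id}_{C'}\otimes\Gamma)[\psi_+^{CC'}]$,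 where $\psi_+^{CC'}$ is a fixed maximally entangled pure state of $C$ and $C'$. A bipartite state $\rho^{XY}$ is unsteerable by (a party acting on) $X$ if for every measurement assemblage $\{M^X_{a|x}\}$ on $X$ the state assemblage $\rho_{a|x}=\mathrm{Tr}_X(M^X_{a|x}\rho^{XY})$ can be written as $\rho_{a|x}=\sum_\lambda p(a|x,\lambda)\rho_\lambda$ with $\rho_\lambda\ge0$, $\sum_\lambda\rho_\lambda=\rho^Y$ and $p(a|x,\lambda)$ conditional probability distributions; otherwise it is steerable by $X$. *)

From HB Require Import structures.
From mathcomp Require Import all_boot all_order all_algebra.
From mathcomp Require Import complex Rstruct.
Set Implicit Arguments. Unset Strict Implicit. Unset Printing Implicit Defensive.
Import Order.TTheory GRing.Theory Num.Theory.
Local Open Scope ring_scope.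

Definition CC : numClosedFieldType := complex Rdefinitions.R.

(* A finite-dimensional quantum system is given by a finite index type
   (its computational basis); an operator on it is a complex matrix indexed
   by that type. Composite systems are indexed by products of index types. *)
Definition Op (I : finType) := I -> I -> CC.
Definition Map (I J : finType) := Op I -> Op J.

Definition idop (I : finType) : Op I := fun i j => (i == j)%:R.
Definition opmul (I : finType) (P Q : Op I) : Op I :=
  fun i j => \sum_k P i k * Q k j.
Definition tens (I J : finType) (P : Op I) (Q : Op J) : Op (prod I J) :=
  fun p q => P p.1 q.1 * Q p.2 q.2.
Definition tr (I : finType) (M : Op I) : CC := \sum_i M i i.

Definition ptr1 (I J : finType) (M : Op (prod I J)) : Op J :=
  fun j j' => \sum_i M (i, j) (i, j').

Definition psd (I : finType) (M : Op I) : Prop :=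
  forall v : I -> CC, 0 <= \sum_i \sum_j (v i)^* * M i j * v j.

Definition state (I : finType) (rho : Op I) : Prop := psd rho /\ tr rho = 1.

Definition linear_map (I J : finType) (G : Map I J) : Prop :=
  forall (a : CC) (X Y : Op I) j j',
    G (fun i i' => a * X i i' + Y i i') j j' = a * G X j j' + G Y j j'.

(* id_K (x) G *)
Definition ampl (K I J : finType) (G : Map I J) : Map (prod K I) (prod K J) :=
  fun X p q => G (fun i i' => X (p.1, i) (q.1, i')) p.2 q.2.

Definition CP (I J : finType) (G : Map I J) : Prop :=
  linear_map G /\
  forall (k : nat) (X : Op (prod 'I_k I)), psd X -> psd (ampl G X).

Definition TP (I J : finType) (G : Map I J) : Prop :=
  forall X : Op I, tr (G X) = tr X.

Definition channel (I J : finType) (G : Map I J) : Prop := CP G /\ TP G.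

Definition channel_extension (A B C : finType)
    (LAB : Map C (prod A B)) (LB : Map C B) : Prop :=
  channel LAB /\ forall X b b', ptr1 (LAB X) b b' = LB X b b'.

Definition povm (A O : finType) (M : O -> Op A) : Prop :=
  (forall o, psd (M o)) /\ forall i j, \sum_o M o i j = idop i j.

(* measurement assemblage {M_{a|x}} : M x a *)
Definition meas_assemblage (A Xs O : finType) (M : Xs -> O -> Op A) : Prop :=
  forall x, povm (M x).

(* conditional probability distributions p(a|x,l) : p x l a *)
Definition cond_prob (Xs L O : finType) (p : Xs -> L -> O -> CC) : Prop :=
  (forall x l a, 0 <= p x l a) /\ forall x l, \sum_a p x l a = 1.

Definition instrument (C B L : finType) (G : L -> Map C B) : Prop :=
  (forall l, CP (G l)) /\ channel (fun X b b' => \sum_l G l X b b').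

Definition channel_assemblage (C B Xs O : finType)
    (LB : Map C B) (G : Xs -> O -> Map C B) : Prop :=
  (forall x a, CP (G x a)) /\
  forall x X b b', \sum_a G x a X b b' = LB X b b'.

Definition unsteerable_chan_assemblage (C B Xs O : finType)
    (G : Xs -> O -> Map C B) : Prop :=
  exists (L : finType) (Gl : L -> Map C B) (p : Xs -> L -> O -> CC),
    instrument Gl /\ cond_prob p /\
    forall x a X b b', G x a X b b' = \sum_l p x l a * Gl l X b b'.

Definition induced_chan_assemblage (A B C Xs O : finType)
    (LAB : Map C (prod A B)) (M : Xs -> O -> Op A) : Xs -> O -> Map C B :=
  fun x a X => ptr1 (opmul (tens (M x a) (@idop B)) (LAB X)).

Definition unsteerable_extension (A B C : finType) (LAB : Map C (prod A B)) : Prop :=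
  forall (Xs O : finType) (M : Xs -> O -> Op A),
    meas_assemblage M ->
    unsteerable_chan_assemblage (induced_chan_assemblage LAB M).

Definition steerable_extension (A B C : finType) (LAB : Map C (prod A B)) : Prop :=
  ~ unsteerable_extension LAB.

Definition unsteerable_state (X Y : finType) (rho : Op (prod X Y)) : Prop :=
  forall (Xs O : finType) (M : Xs -> O -> Op X),
    meas_assemblage M ->
    exists (L : finType) (rl : L -> Op Y) (p : Xs -> L -> O -> CC),
      (forall l, psd (rl l)) /\
      (forall y y', \sum_l rl l y y' = ptr1 rho y y') /\
      cond_prob p /\
      forall x a y y',
        ptr1 (opmul (tens (M x a) (@idop Y)) rho) y y'
        = \sum_l p x l a * rl l y y'.

Definition steerable_state (X Y : finType) (rho : Op (prod X Y)) : Prop :=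
  ~ unsteerable_state rho.

(* fixed maximally entangled state psi_+ = |phi><phi|,
   |phi> = #|C|^{-1/2} \sum_i |i>_C |i>_C' ;
   J_{C'Y}(G) = (id_{C'} (x) G)[psi_+], an operator on C' (x) Y,
   where C' is a copy of C (same index type). *)
Definition choi (C Y : finType) (G : Map C Y) : Op (prod C Y) :=
  fun p q => #|C|%:R^-1 * G (fun i j => ((i == p.1) && (j == q.1))%:R) p.2 q.2.

Definition regroup_A_BC (C A B : finType) (J : Op (prod C (prod A B))) : Op (prod A (prod B C)) :=
  fun p q => J (p.2.2, (p.1, p.2.1)) (q.2.2, (q.1, q.2.1)).

(* The Choi-Jamiolkowski correspondence G |-> J(G) is a linear bijection between
   maps C -> B and operators on B (x) C', under which completely positive maps
   are exactly the maps with a psd Choi operator (conversely, a spectral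
   decomposition of a psd operator exhibits its map as a sum of Kraus maps).
   Measuring A on the Choi state of LAB with an effect M_{a|x} leaves on B C'
   the Choi operator of the induced map Lambda_{a|x}.  Hence a local hidden
   state model {rho_lambda} of the Choi state and an instrument model
   {Lambda_lambda} of the induced channel assemblage translate into each other
   through J, with the same response functions p(a|x,lambda). *)

From mathcomp Require Import all_boot all_order all_algebra ring sesquilinear spectral.
From Stdlib Require Import FunctionalExtensionality.
Set Implicit Arguments. Unset Strict Implicit. Unset Printing Implicit Defensive.
Import Order.TTheory GRing.Theory Num.Theory.
Local Open Scope ring_scope.

Lemma conjCD (F : numClosedFieldType) (a b : F) : (a + b)^* = a^* + b^*.
Proof. exact: rmorphD. Qed.

Lemma conjCM (F : numClosedFieldType) (a b : F) : (a * b)^* = a^* * b^*.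
Proof. exact: rmorphM. Qed.

Lemma conjC_sum (F : numClosedFieldType) (I : finType) (f : I -> F) :
  (\sum_i f i)^* = \sum_i (f i)^*.
Proof. exact: rmorph_sum. Qed.

Lemma sum_delta_mull (I : finType) (x : I) (F : I -> CC) :
  \sum_j (j == x)%:R * F j = F x.
Proof.
rewrite (bigD1 x) // big1 => [|j /negbTE ->]; last exact: mul0r.
by rewrite eqxx mul1r; exact: addr0.
Qed.

Lemma sum_delta_mulr (I : finType) (x : I) (F : I -> CC) :
  \sum_j F j * (j == x)%:R = F x.
Proof. by under eq_bigr do rewrite mulrC; exact: sum_delta_mull. Qed.

Lemma sum_pair (I J : finType) (F : prod I J -> CC) :
  \sum_p F p = \sum_i \sum_j F (i, j).
Proof. by rewrite pair_bigA; apply: eq_bigr => -[]. Qed.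

Definition qform (I : finType) (Z : Op I) (v : I -> CC) :=
  \sum_i \sum_j (v i)^* * Z i j * v j.

Lemma psdP (I : finType) (Z : Op I) : psd Z <-> forall v, 0 <= qform Z v.
Proof. by []. Qed.

Lemma psd_eq (I : finType) (Z Z' : Op I) :
  (forall i j, Z i j = Z' i j) -> psd Z' -> psd Z.
Proof.
by move=> ZZ' HZ'; suff -> : Z = Z' by []; do 2 apply: functional_extensionality => ?.
Qed.

Lemma psd_reindex (I J : finType) (f : I -> J) (g : J -> I) (Z : Op J) :
  cancel f g -> cancel g f -> psd Z -> psd (fun i i' => Z (f i) (f i')).
Proof.
move=> fK gK HZ v; have := HZ (fun j => v (g j)).
have bf : {on [pred j | true], bijective f} by apply: onW_bij; exists g.
rewrite (reindex f) //; under eq_bigr => i _ do rewrite (reindex f) //.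
by under eq_bigr => i _ do under eq_bigr => i' _ do rewrite !fK.
Qed.

Lemma psd_scale (I : finType) (c : CC) (Z : Op I) :
  0 <= c -> psd Z -> psd (fun i j => c * Z i j).
Proof.
move=> c0 HZ; apply/psdP => v.
rewrite (_ : qform _ v = c * qform Z v); first exact: (mulr_ge0 c0 (HZ v)).
rewrite /qform mulr_sumr; apply: eq_bigr => i _; rewrite mulr_sumr.
by apply: eq_bigr => j _; ring.
Qed.

Lemma psd_sum (I K : finType) (Z : K -> Op I) :
  (forall k, psd (Z k)) -> psd (fun i j => \sum_k Z k i j).
Proof.
move=> HZ; apply/psdP => v; rewrite (_ : qform _ v = \sum_k qform (Z k) v).
  by apply: sumr_ge0 => k _; exact: HZ.
rewrite /qform [RHS]exchange_big; apply: eq_bigr => i _.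
rewrite [RHS]exchange_big; apply: eq_bigr => j _.
by rewrite mulr_sumr mulr_suml.
Qed.

Lemma psd_congr (I J : finType) (K : J -> I -> CC) (Z : Op J) :
  psd Z -> psd (fun i i' => \sum_j \sum_j' (K j i)^* * Z j j' * K j' i').
Proof.
move=> HZ; apply/psdP => v.
rewrite (_ : qform _ v = qform Z (fun j => \sum_i K j i * v i)); first exact: HZ.
rewrite /qform.
transitivity (\sum_i \sum_i' \sum_j \sum_j' (v i)^* * ((K j i)^* * Z j j' * K j' i') * v i').
  apply: eq_bigr => i _; apply: eq_bigr => i' _.
  rewrite mulr_sumr mulr_suml; apply: eq_bigr => j _.
  by rewrite mulr_sumr mulr_suml.
rewrite (eq_bigr _ (fun i _ => exchange_big _ _ _ _ _ _)).
rewrite (eq_bigr _ (fun i _ => eq_bigr _ (fun j _ => exchange_big _ _ _ _ _ _))).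
rewrite exchange_big (eq_bigr _ (fun j _ => exchange_big _ _ _ _ _ _)).
apply: eq_bigr => j _; apply: eq_bigr => j' _.
rewrite conjC_sum !mulr_suml; apply: eq_bigr => i _.
rewrite !mulr_sumr; apply: eq_bigr => i' _; rewrite conjCM; ring.
Qed.

Lemma psd_idop (I : finType) : psd (@idop I).
Proof.
apply/psdP => v; rewrite (_ : qform _ v = \sum_i (v i)^* * v i).
  by apply: sumr_ge0 => i _; rewrite mulrC; exact: mul_conjC_ge0.
apply: eq_bigr => i _; rewrite -(sum_delta_mull i (fun j => (v i)^* * v j)).
by apply: eq_bigr => j _; rewrite /idop eq_sym; ring.
Qed.

Lemma qform_delta (I : finType) (Z : Op I) x :
  qform Z (fun i => (i == x)%:R) = Z x x.
Proof.
rewrite /qform; under eq_bigr => i _ do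
  rewrite conjC_nat (sum_delta_mulr x (fun j => (i == x)%:R * Z i j)).
exact: (sum_delta_mull x (fun i => Z i x)).
Qed.

Lemma sum_mul_delta2 (I : finType) (F : I -> CC) a b x y :
  \sum_j F j * (a * (j == x)%:R + b * (j == y)%:R) = F x * a + F y * b.
Proof.
transitivity (\sum_j ((F j * a) * (j == x)%:R + (F j * b) * (j == y)%:R)).
  by apply: eq_bigr => j _; ring.
by rewrite big_split !sum_delta_mulr.
Qed.

Lemma qform_delta2 (I : finType) (Z : Op I) x y t :
  qform Z (fun i => 1 * (i == x)%:R + t * (i == y)%:R)
  = Z x x + Z x y * t + t^* * Z y x + t^* * Z y y * t.
Proof.
rewrite /qform; under eq_bigr => i _ do
  rewrite (sum_mul_delta2 (fun j => (1 * (i == x)%:R + t * (i == y)%:R)^* * Z i j)).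
transitivity (\sum_i (Z i x * 1 + Z i y * t) * (1 * (i == x)%:R + t^* * (i == y)%:R)).
  apply: eq_bigr => i _; rewrite conjCD !conjCM conjC1 !conjC_nat; ring.
by rewrite sum_mul_delta2; ring.
Qed.

(* The quadratic form of a psd operator is real; testing it on e_x + e_y and
   e_x + i e_y recovers both parts of Z x y - (Z y x)^*. *)
Lemma psd_hermitian (I : finType) (Z : Op I) : psd Z -> forall x y, Z x y = (Z y x)^*.
Proof.
move=> HZ x y.
have Zxx z : (Z z z)^* = Z z z.
  by rewrite -qform_delta; apply: geC0_conj; exact: HZ.
pose q t := qform Z (fun i => 1 * (i == x)%:R + t * (i == y)%:R).
have q_real t : (q t)^* = q t by apply: geC0_conj; exact: HZ.
have : 'i *+ 2 * (Z x y - (Z y x)^*) = - 'i * ((q 1)^* - q 1) - ((q 'i)^* - q 'i).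
  by rewrite /q !qform_delta2 !conjCD !conjCM conjC1 !conjCK conjCi !Zxx; ring.
rewrite !q_real !subrr mulr0 subr0 => /eqP.
by rewrite mulf_eq0 mulrn_eq0 /= (negbTE (neq0Ci _)) /= subr_eq0 => /eqP.
Qed.

Lemma psd_spectral (I : finType) (Z : Op I) : psd Z ->
  exists n (d : 'I_n -> CC) (w : 'I_n -> I -> CC),
    (forall k, 0 <= d k) /\ (forall i j, Z i j = \sum_k d k * (w k i)^* * w k j).
Proof.
move=> HZ.
pose M : 'M[CC]_#|I| := \matrix_(i, j) Z (enum_val i) (enum_val j).
have herm : M \is hermsymmx.
  apply/is_hermitianmxP; rewrite expr0 scale1r; apply/matrixP => i j; rewrite !mxE.
  exact: psd_hermitian.
have /orthomx_spectralP := hermitian_normalmx herm.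
have PU := spectral_unitarymx M.
set P := spectralmx M; set D := spectral_diag M.
rewrite (invmx_unitary PU) => HM.
exists #|I|, (fun k => D 0 k), (fun k x => P k (enum_rank x)); split.
  move=> k.
  have : diag_mx D = P *m M *m (P ^t Num.conj)%sesqui.
    by rewrite [in RHS]HM !mulmxA (unitarymxP PU) mul1mx -mulmxA (unitarymxP PU) mulmx1.
  move/matrixP/(_ k k); rewrite !mxE eqxx mulr1n => ->.
  have := HZ (fun x => (P k (enum_rank x))^*).
  have bv := onW_bij [pred i : I | true] (@enum_val_bij I).
  rewrite (reindex _ bv); under eq_bigr => i _ do rewrite (reindex _ bv).
  congr (_ <= _).
  under eq_bigr => i _ do under eq_bigr => j _ do rewrite !enum_valK conjCK.
  rewrite exchange_big; apply: eq_bigr => j _.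
  rewrite !mxE mulr_suml.
  by apply: eq_bigr => i _; rewrite !mxE.
move=> x y; move/matrixP: HM => /(_ (enum_rank x) (enum_rank y)).
rewrite mul_mx_diag !mxE !enum_rankK => ->.
by apply: eq_bigr => k _; rewrite !mxE; ring.
Qed.

Definition unit_op (I : finType) (c c' : I) : Op I :=
  fun i j => ((i == c) && (j == c'))%:R.

Lemma map_congr (I J : finType) (G : Map I J) (X Y : Op I) j j' :
  (forall i i', X i i' = Y i i') -> G X j j' = G Y j j'.
Proof.
move=> XY; suff -> : X = Y by [].
by apply: functional_extensionality => i; apply: functional_extensionality.
Qed.

Section LinearMap.
Variables (I J : finType) (G : Map I J).
Hypothesis G_lin : linear_map G.

Lemma linear_map0 j j' : G (fun _ _ => 0) j j' = 0.
Proof.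
have := G_lin 1 (fun _ _ => 0) (fun _ _ => 0) j j'.
rewrite (@map_congr _ _ G _ (fun _ _ => 0)) => [|*]; last by rewrite mulr0 addr0.
rewrite mul1r => /(congr1 (fun z => z - G (fun _ _ => 0) j j')).
by rewrite subrr addrK.
Qed.

Lemma linear_mapZ a X j j' : G (fun i i' => a * X i i') j j' = a * G X j j'.
Proof.
have := G_lin a X (fun _ _ => 0) j j'; rewrite linear_map0 addr0 => <-.
by apply: map_congr => *; rewrite addr0.
Qed.

Lemma linear_mapD X Y j j' : G (fun i i' => X i i' + Y i i') j j' = G X j j' + G Y j j'.
Proof.
have := G_lin 1 X Y j j'; rewrite mul1r => <-.
by apply: map_congr => *; rewrite mul1r.
Qed.

Lemma linear_map_sum (K : finType) (F : K -> Op I) j j' :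
  G (fun i i' => \sum_k F k i i') j j' = \sum_k G (F k) j j'.
Proof.
rewrite /index_enum; elim: (Finite.enum K) => [|k s IH].
  by rewrite big_nil; under map_congr do rewrite big_nil; exact: linear_map0.
by rewrite big_cons; under map_congr do rewrite big_cons; rewrite linear_mapD IH.
Qed.

Lemma linear_map_unit_expand X j j' :
  G X j j' = \sum_c \sum_c' X c c' * G (unit_op c c') j j'.
Proof.
rewrite (@map_congr _ _ G X (fun i i' => \sum_c \sum_c' X c c' * unit_op c c' i i')).
  rewrite linear_map_sum; apply: eq_bigr => c _; rewrite linear_map_sum.
  by apply: eq_bigr => c' _; rewrite linear_mapZ.
move=> i i'; rewrite -(sum_delta_mulr i (fun c => X c i')).
apply: eq_bigr => c _; rewrite -(sum_delta_mulr i' (fun c' => X c c' * (c == i)%:R)).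
apply: eq_bigr => c' _; rewrite /unit_op ![_ == c]eq_sym ![_ == c']eq_sym.
by case: (c == i); case: (c' == i'); rewrite ?mulr1 ?mulr0 ?mul0r.
Qed.

End LinearMap.

(* The Choi operator with its two factors swapped, so that the input copy C'
   comes last as in J_{AB C'} regrouped as A | B C'. *)
Definition choi_swap (C Y : finType) (G : Map C Y) : Op (prod Y C) :=
  fun p q => choi G (p.2, p.1) (q.2, q.1).

Definition choi_inv (C Y : finType) (R : Op (prod Y C)) : Map C Y :=
  fun X b b' => #|C|%:R * \sum_c \sum_c' X c c' * R (b, c) (b', c').

Lemma choi_swapE (C Y : finType) (G : Map C Y) b c b' c' :
  choi_swap G (b, c) (b', c') = #|C|%:R^-1 * G (unit_op c c') b b'.
Proof. by []. Qed.

Lemma choi_swapK (C Y : finType) (G : Map C Y) : (0 < #|C|)%N ->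
  linear_map G -> forall X b b', choi_inv (choi_swap G) X b b' = G X b b'.
Proof.
move=> C_gt0 G_lin X b b'; rewrite (linear_map_unit_expand G_lin) /choi_inv mulr_sumr.
apply: eq_bigr => c _; rewrite mulr_sumr; apply: eq_bigr => c' _; rewrite choi_swapE.
have : (#|C|%:R : CC) != 0 by rewrite pnatr_eq0 -lt0n.
by move=> ?; field.
Qed.

Lemma choi_inv_congr (C Y : finType) (R1 R2 : Op (prod Y C)) X b b' :
  (forall y y', R1 y y' = R2 y y') -> choi_inv R1 X b b' = choi_inv R2 X b b'.
Proof.
by move=> R12; congr (_ * _); apply: eq_bigr => c _; apply: eq_bigr => c' _; rewrite R12.
Qed.

Lemma choi_inv_sum (C Y L : finType) (R : L -> Op (prod Y C)) X b b' :
  choi_inv (fun y y' => \sum_l R l y y') X b b' = \sum_l choi_inv (R l) X b b'.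
Proof.
rewrite /choi_inv -mulr_sumr; congr (_ * _).
rewrite [RHS]exchange_big; apply: eq_bigr => c _; rewrite [RHS]exchange_big.
by apply: eq_bigr => c' _; rewrite mulr_sumr.
Qed.

Lemma choi_invZ (C Y : finType) (a : CC) (R : Op (prod Y C)) X b b' :
  choi_inv (fun y y' => a * R y y') X b b' = a * choi_inv R X b b'.
Proof.
rewrite /choi_inv mulrCA; congr (_ * _); rewrite mulr_sumr; apply: eq_bigr => c _.
by rewrite mulr_sumr; apply: eq_bigr => c' _; ring.
Qed.

Lemma choi_inv_linear (C Y : finType) (R : Op (prod Y C)) : linear_map (choi_inv R).
Proof.
move=> a X X' b b'; rewrite /choi_inv mulrCA -mulrDr; congr (_ * _).
rewrite mulr_sumr -big_split; apply: eq_bigr => c _.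
by rewrite mulr_sumr -big_split; apply: eq_bigr => c' _; rewrite mulrDl mulrA.
Qed.

(* [choi_swap G] is, up to the factor #|C|^-1, the amplification of G applied
   to the unnormalised maximally entangled operator, which is psd. *)
Lemma CP_choi_swap_psd (C Y : finType) (G : Map C Y) : CP G -> psd (choi_swap G).
Proof.
move=> [_ G_CP].
pose X : Op (prod 'I_#|C| C) :=
  fun p q => ((enum_val p.1 == p.2) && (enum_val q.1 == q.2))%:R.
have X_psd : psd X.
  apply/psdP => v; pose s := \sum_p (enum_val p.1 == p.2)%:R * v p.
  suff -> : qform X v = s^* * s by rewrite mulrC; apply: mul_conjC_ge0.
  rewrite /s conjC_sum mulr_suml; apply: eq_bigr => p _; rewrite mulr_sumr.
  apply: eq_bigr => q _; rewrite /X -mulnb natrM conjCM conjC_nat; ring.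
pose f := fun y : prod Y C => (enum_rank y.2, y.1).
pose g := fun p : prod 'I_#|C| Y => (p.2, enum_val p.1).
have fK : cancel f g by move=> [b c]; rewrite /f /g /= enum_rankK.
have gK : cancel g f by move=> [p b]; rewrite /f /g /= enum_valK.
apply: (@psd_eq _ _ (fun y y' => #|C|%:R^-1 * ampl G X (f y) (f y'))) => [[b c] [b' c']|].
  rewrite choi_swapE /ampl /f /=; apply: congr1; apply: map_congr => i i'.
  by rewrite /X /unit_op /= !enum_rankK [c == _]eq_sym [c' == _]eq_sym.
apply: psd_scale; first by rewrite invr_ge0 ler0n.
exact: (psd_reindex fK gK (G_CP _ X X_psd)).
Qed.

Lemma sum_pair_delta (I J : finType) (x : I) (F : I -> J -> CC) :
  \sum_(u : prod I J) (u.1 == x)%:R * F u.1 u.2 = \sum_j F x j.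
Proof.
rewrite -(sum_delta_mull x (fun i => \sum_j F i j)) sum_pair.
by apply: eq_bigr => i _; rewrite mulr_sumr.
Qed.

Definition kraus_map (C Y : finType) (w : prod Y C -> CC) : Map C Y :=
  fun X b b' => \sum_c \sum_c' (w (b, c))^* * X c c' * w (b', c').

Lemma psd_ampl_kraus_map (C Y : finType) (w : prod Y C -> CC) k (X : Op (prod 'I_k C)) :
  psd X -> psd (ampl (kraus_map w) X).
Proof.
pose K (u : prod 'I_k C) (s : prod 'I_k Y) := (u.1 == s.1)%:R * w (s.2, u.2).
move=> X_psd; apply: psd_eq (psd_congr K X_psd) => -[p b] [q b'].
rewrite /ampl /kraus_map; cbn [fst snd].
transitivity (\sum_(u : prod 'I_k C) (u.1 == p)%:R * (fun p' c =>
  \sum_(u' : prod 'I_k C) (u'.1 == q)%:R * (fun q' c' =>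
    (w (b, c))^* * X (p', c) (q', c') * w (b', c')) u'.1 u'.2) u.1 u.2).
  rewrite (sum_pair_delta p (fun p' c => \sum_(u' : prod 'I_k C) (u'.1 == q)%:R *
    ((w (b, c))^* * X (p', c) (u'.1, u'.2) * w (b', u'.2)))).
  apply: eq_bigr => c _.
  by rewrite (sum_pair_delta q (fun q' c' => (w (b, c))^* * X (p, c) (q', c') * w (b', c'))).
apply: eq_bigr => -[p' c] _; rewrite mulr_sumr; apply: eq_bigr => -[q' c'] _.
by rewrite /K; cbn [fst snd]; rewrite conjCM conjC_nat; ring.
Qed.

(* A spectral decomposition of R writes [choi_inv R] as a positive
   combination of Kraus maps. *)
Lemma choi_inv_CP (C Y : finType) (R : Op (prod Y C)) : psd R -> CP (choi_inv R).
Proof.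
move=> R_psd; split; first exact: choi_inv_linear.
move=> k X X_psd; have [n [d [w [d_ge0 Rdw]]]] := psd_spectral R_psd.
pose Z m := ampl (kraus_map (w m)) X.
apply: (@psd_eq _ _ (fun s t => #|C|%:R * \sum_m d m * Z m s t)) => [s t|].
  rewrite /Z /ampl /kraus_map /choi_inv; congr (_ * _).
  under [RHS]eq_bigr => m _ do rewrite mulr_sumr.
  rewrite [RHS]exchange_big; apply: eq_bigr => c _.
  under [RHS]eq_bigr => m _ do rewrite mulr_sumr.
  rewrite [RHS]exchange_big; apply: eq_bigr => c' _.
  by rewrite Rdw mulr_sumr; apply: eq_bigr => m _; ring.
apply: psd_scale; first exact: ler0n.
apply: (@psd_sum _ _ (fun m s t => d m * Z m s t)) => m.
exact: psd_scale (psd_ampl_kraus_map _ X_psd).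
Qed.

Lemma tr_ptr1 (I J : finType) (M : Op (prod I J)) : tr (ptr1 M) = tr M.
Proof. by rewrite /tr /ptr1 [RHS]sum_pair exchange_big. Qed.

Lemma ptr1_opmul_tens_idop (I J : finType) (T : Op I) (Z : Op (prod I J)) y y' :
  ptr1 (opmul (tens T (@idop J)) Z) y y' = \sum_i \sum_i' T i i' * Z (i', y) (i, y').
Proof.
apply: eq_bigr => i _; rewrite /opmul sum_pair; apply: eq_bigr => i' _.
rewrite -(sum_delta_mull y (fun y1 => T i i' * Z (i', y1) (i, y'))).
by apply: eq_bigr => y1 _; rewrite /tens /idop; cbn [fst snd]; rewrite eq_sym; ring.
Qed.

Lemma ptr1_opmul_idop (I J : finType) (Z : Op (prod I J)) y y' :
  ptr1 (opmul (tens (@idop I) (@idop J)) Z) y y' = ptr1 Z y y'.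
Proof.
rewrite ptr1_opmul_tens_idop; apply: eq_bigr => i _.
rewrite -(sum_delta_mull i (fun i' => Z (i', y) (i, y'))).
by apply: eq_bigr => i' _; rewrite /idop eq_sym.
Qed.

Definition induced_map (A B C : finType) (LAB : Map C (prod A B)) (T : Op A) : Map C B :=
  fun X => ptr1 (opmul (tens T (@idop B)) (LAB X)).

Section Steering.
Variables (A B C : finType) (LAB : Map C (prod A B)).

Lemma induced_map_linear T : linear_map LAB -> linear_map (induced_map LAB T).
Proof.
move=> LAB_lin a X Y b b'; rewrite /induced_map /ptr1 /opmul mulr_sumr -big_split.
apply: eq_bigr => a0 _; rewrite mulr_sumr -big_split; apply: eq_bigr => k _.
by rewrite LAB_lin mulrDr mulrCA.
Qed.

Lemma induced_map_idop X b b' : induced_map LAB (@idop A) X b b' = ptr1 (LAB X) b b'.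
Proof. exact: ptr1_opmul_idop. Qed.

Lemma induced_map_sum (O : finType) (T : O -> Op A) X b b' :
  \sum_o induced_map LAB (T o) X b b' = induced_map LAB (fun i j => \sum_o T o i j) X b b'.
Proof.
rewrite /induced_map /ptr1 exchange_big; apply: eq_bigr => a _.
rewrite /opmul exchange_big; apply: eq_bigr => k _.
by rewrite /tens -!mulr_suml.
Qed.

Lemma steered_choi_state T b c b' c' :
  ptr1 (opmul (tens T (@idop (prod B C))) (regroup_A_BC (choi LAB))) (b, c) (b', c')
  = choi_swap (induced_map LAB T) (b, c) (b', c').
Proof.
rewrite choi_swapE /induced_map !ptr1_opmul_tens_idop mulr_sumr; apply: eq_bigr => a _.
by rewrite mulr_sumr; apply: eq_bigr => a' _; rewrite mulrCA.
Qed.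

Lemma ptr1_choi_state y y' :
  ptr1 (regroup_A_BC (choi LAB)) y y' = choi_swap (induced_map LAB (@idop A)) y y'.
Proof. by case: y y' => [b c] [b' c']; rewrite -steered_choi_state ptr1_opmul_idop. Qed.

Lemma unsteerable_model_marginal (Xs L O : finType) (M : Xs -> O -> Op A)
    (Gl : L -> Map C B) (p : Xs -> L -> O -> CC) x :
  povm (M x) -> (forall l, \sum_a p x l a = 1) ->
  (forall a X b b', induced_map LAB (M x a) X b b' = \sum_l p x l a * Gl l X b b') ->
  forall X b b', \sum_l Gl l X b b' = ptr1 (LAB X) b b'.
Proof.
move=> [_ Mx_sum] p_sum Mx_model X b b'.
rewrite -induced_map_idop (_ : @idop A = fun i j => \sum_a M x a i j); last first.
  by do 2 apply: functional_extensionality => ?; rewrite Mx_sum.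
rewrite -induced_map_sum; under [RHS]eq_bigr do rewrite Mx_model.
rewrite exchange_big; apply: eq_bigr => l _.
by rewrite -mulr_suml p_sum mul1r.
Qed.

Lemma unsteerable_extension_model (Xs O : finType) (M : Xs -> O -> Op A) :
  unsteerable_extension LAB -> meas_assemblage M ->
  exists (L : finType) (Gl : L -> Map C B) (p : Xs -> L -> O -> CC),
    (forall l, CP (Gl l)) /\
    (forall X b b', \sum_l Gl l X b b' = ptr1 (LAB X) b b') /\
    cond_prob p /\
    forall x a X b b', induced_map LAB (M x a) X b b' = \sum_l p x l a * Gl l X b b'.
Proof.
move=> LAB_unst M_meas; case: (pickP (fun _ : Xs => true)) => [x0 _ | Xs0].
  have [L [Gl [p [[Gl_CP _] [p_cond Gl_model]]]]] := LAB_unst Xs O M M_meas.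
  exists L, Gl, p; split; [|split] => //.
  exact: (unsteerable_model_marginal (M_meas x0) (proj2 p_cond x0) (Gl_model x0)).
(* With no settings to steer, any instrument for Tr_A o LAB does; one is
   obtained by measuring the trivial POVM. *)
have triv_meas : meas_assemblage (fun (_ : unit) (_ : unit) => @idop A).
  by move=> _; split=> [_|i j]; [exact: psd_idop | rewrite (big_pred1 tt) // => -[]].
have [L [Gl [p [[Gl_CP _] [p_cond Gl_model]]]]] := LAB_unst _ _ _ triv_meas.
exists L, Gl, (fun _ _ _ => 0); split=> //; split.
  exact: (unsteerable_model_marginal (triv_meas tt) (proj2 p_cond tt) (Gl_model tt)).
by split=> [|x]; first split=> x; have := Xs0 x.
Qed.

End Steering.

Lemma choi_swap_sum (C Y L : finType) (Gl : L -> Map C Y) y y' :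
  \sum_l choi_swap (Gl l) y y' = choi_swap (fun X b b' => \sum_l Gl l X b b') y y'.
Proof. by rewrite [RHS]mulr_sumr. Qed.

Lemma unsteerable_extension_state (A B C : finType) (LAB : Map C (prod A B)) :
  unsteerable_extension LAB -> unsteerable_state (regroup_A_BC (choi LAB)).
Proof.
move=> LAB_unst Xs O M M_meas.
have [L [Gl [p [Gl_CP [Gl_marg [p_cond Gl_model]]]]]] :=
  unsteerable_extension_model LAB_unst M_meas.
exists L, (fun l => choi_swap (Gl l)), p; split; [|split; [|split]] => //.
- by move=> l; exact: CP_choi_swap_psd.
- move=> [b c] [b' c']; rewrite ptr1_choi_state choi_swap_sum !choi_swapE.
  by rewrite Gl_marg induced_map_idop.
- move=> x a [b c] [b' c']; rewrite steered_choi_state choi_swapE Gl_model mulr_sumr.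
  by apply: eq_bigr => l _; rewrite choi_swapE mulrCA.
Qed.

Lemma unsteerable_state_extension (A B C : finType) (LAB : Map C (prod A B)) :
  (0 < #|C|)%N -> channel LAB ->
  unsteerable_state (regroup_A_BC (choi LAB)) -> unsteerable_extension LAB.
Proof.
move=> C_gt0 [[LAB_lin _] LAB_TP] rho_unst Xs O M M_meas.
have [L [rl [p [rl_psd [rl_marg [p_cond rl_model]]]]]] := rho_unst Xs O M M_meas.
have induced_choi T X b b' :
    choi_inv (choi_swap (induced_map LAB T)) X b b' = induced_map LAB T X b b'.
  exact: choi_swapK C_gt0 (induced_map_linear T LAB_lin) X b b'.
exists L, (fun l => choi_inv (rl l)), p; split; [|split] => //.
  have sum_rl X b b' : \sum_l choi_inv (rl l) X b b' = ptr1 (LAB X) b b'.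
    rewrite -choi_inv_sum -induced_map_idop -induced_choi.
    by apply: choi_inv_congr => y y'; rewrite rl_marg ptr1_choi_state.
  split; first by move=> l; exact: choi_inv_CP.
  have -> : (fun X b b' => \sum_l choi_inv (rl l) X b b')
            = choi_inv (fun y y' => \sum_l rl l y y').
    by do 3 apply: functional_extensionality => ?; rewrite choi_inv_sum.
  split; first exact/choi_inv_CP/psd_sum.
  move=> X; rewrite -LAB_TP -tr_ptr1.
  by apply: eq_bigr => b _; rewrite choi_inv_sum sum_rl.
move=> x a X b b'; rewrite -[LHS]/(induced_map LAB (M x a) X b b').
rewrite -induced_choi; under [RHS]eq_bigr do rewrite -choi_invZ.
rewrite -choi_inv_sum; apply: choi_inv_congr => -[b1 c1] [b2 c2].
by rewrite -steered_choi_state rl_model.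
Qed.

Theorem theorem1 (A B C : finType)
    (hA : (0 < #|A|)%N) (hB : (0 < #|B|)%N) (hC : (0 < #|C|)%N)
    (LAB : Map C (prod A B)) (LB : Map C B) :
  channel_extension LAB LB ->
  (steerable_extension LAB <-> steerable_state (regroup_A_BC (choi LAB))).
Proof.
move=> [LAB_chan _]; split=> steer unst; apply: steer.
  exact: unsteerable_state_extension hC LAB_chan unst.
exact: unsteerable_extension_state unst.
Qed.
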